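(* Let $\mathcal V=\{v^{(1)},\dots,v^{(p)}\}\subset(\mathbb{R}\cup\{-\infty\})^n$ and let $V$ be the $n\times p$ matrix with columns $v^{(k)}$; assume $V$ has no row and no column identically equal to $-\infty$. Let $T$ be the operator $$T_i(x)=\inf_{k\in[p],\,V_{ik}\neq-\infty}\Big[-V_{ik}+\max_{j\in[n],\,j\neq i}(V_{jk}+x_j)\Big],\qquad i\in[n].$$ Then for all $\lambda\in[-\infty,0]$ and all $b\in(\mathbb{R}\cup\{-\infty\})^n$ not identically $-\infty$, $$T(b)\ge\lambda+b\iff\operatorname{dist}_H(\mathcal V,\mathcal H_b)\le-\lambda.$$
   Context: $\mathbb{R}_{\max}=\mathbb{R}\cup\{-\infty\}$, $-\infty+c=-\infty$, $\max\emptyset=-\infty$. For $b$ not identically $-\infty$, $\mathcal H_b=\{y\in\mathbb{R}_{\max}^n:\max_i(b_i+y_i)\text{ is achieved at least twice}\}$. Hilbert's projective metric: $d(x,y)=\inf\{\lambda-\mu:\lambda,\mu\in\mathbb{R},\ \mu+y_i\le x_i\le\lambda+y_i\ \forall i\}\in[0,+\infty]$ (and $d(\bot,\bot)=0$). For sets $A,B$, $\operatorname{dist}_H(A,B)=\sup_{a\in A}\inf_{y\in B}d(a,y)$. *)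

(* R_max = \bar R restricted to values <> +oo. *)
From HB Require Import structures.
From mathcomp Require Import all_boot all_order all_algebra.
From mathcomp Require Import all_classical all_reals ereal.
Set Implicit Arguments. Unset Strict Implicit. Unset Printing Implicit Defensive.
Import Order.TTheory GRing.Theory Num.Theory.
Local Open Scope classical_set_scope.
Local Open Scope ereal_scope.

Section Defs.
Variable R : realType.

Definition rmax_vec (n : nat) (x : 'I_n -> \bar R) : Prop := forall i, x i != +oo.

Definition tmax (n : nat) (b y : 'I_n -> \bar R) : \bar R :=
  \big[Order.max/-oo]_(i < n) (b i + y i).

Definition Hyp (n : nat) (b : 'I_n -> \bar R) : set ('I_n -> \bar R) :=
  [set y | rmax_vec y /\
     exists i j : 'I_n, i != j /\ b i + y i = tmax b y /\ b j + y j = tmax b y].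

(* Hilbert's projective metric, with d(bot,bot) = 0 and inf of empty = +oo *)
Definition hilbert (n : nat) (x y : 'I_n -> \bar R) : \bar R :=
  if [forall i, (x i == -oo) && (y i == -oo)] then 0
  else ereal_inf [set z | exists lam mu : R, z = (lam - mu)%:E /\
         forall i, mu%:E + y i <= x i /\ x i <= lam%:E + y i].

Definition distH (n : nat) (A B : set ('I_n -> \bar R)) : \bar R :=
  ereal_sup [set ereal_inf [set hilbert a y | y in B] | a in A].

Definition cols (n p : nat) (V : 'I_n -> 'I_p -> \bar R) : set ('I_n -> \bar R) :=
  [set fun i => V i k | k in [set: 'I_p]].

Definition Top (n p : nat) (V : 'I_n -> 'I_p -> \bar R) (x : 'I_n -> \bar R)
  (i : 'I_n) : \bar R :=
  \big[Order.min/+oo]_(k < p | V i k != -oo)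
     (- V i k + \big[Order.max/-oo]_(j < n | j != i) (V j k + x j)).

End Defs.

(* For one point v, the distance from v to H_b is the gap between the largest
   value of b_i + v_i and the largest of the others.  Indeed, for y in H_b the
   maximum of b + y is also attained at some index c other than a given i, and
   sandwiching y between shifts of v gives d(v, y) >= b_i + v_i - max_(j != i)
   (b_j + v_j).  Conversely, lowering v at a maximizing index until it ties with
   the second maximum yields a point of H_b within that distance (when the
   maximum is -oo, v itself lies in H_b).  The inequality T(b) >= lam + b says
   that this gap is at most -lam for every column, and dist_H is the supremum
   over the columns. *)

From mathcomp Require Import all_boot all_order all_algebra.
From mathcomp Require Import all_classical all_reals ereal.
From mathcomp Require Import lra.
Import Order.TTheory GRing.Theory Num.Theory.
Local Open Scope classical_set_scope.
Local Open Scope ereal_scope.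

Section ColumnDistance.
Variables (R : realType) (n : nat).
Local Set Implicit Arguments.
Local Unset Strict Implicit.
Implicit Types (v b y : 'I_n -> \bar R) (P : pred 'I_n) (F : 'I_n -> \bar R).

Lemma bigmaxe_EFin_attained P F (r : R) :
  \big[Order.max/-oo]_(i | P i) F i = r%:E -> exists2 i, P i & F i = r%:E.
Proof.
move=> max_eq; have [j Pj | P0] := pickP P; last first.
  by move: max_eq; rewrite big_pred0.
have [i Pi Fi] := eq_bigmax j P F Pj (fun i _ => leNye (F i)).
by exists i; rewrite // -max_eq Fi.
Qed.

Lemma bigmaxe_neqy P F : (forall i, P i -> F i != +oo) ->
  \big[Order.max/-oo]_(i | P i) F i != +oo.
Proof.
by move=> Fy; rewrite -ltey; apply: bigmax_lt => // i /Fy; rewrite ltey.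
Qed.

Lemma hilbert_le_sandwich v y (l m : R) : (m <= l)%R ->
  (forall i, m%:E + y i <= v i /\ v i <= l%:E + y i) -> hilbert v y <= (l - m)%:E.
Proof.
move=> ml vy; rewrite /hilbert; case: ifP => _; first by rewrite lee_fin subr_ge0.
by apply: ereal_inf_lbound; exists l, m.
Qed.

Definition dist_to v (B : set ('I_n -> \bar R)) :=
  ereal_inf [set hilbert v y | y in B].

Definition max_others F (i : 'I_n) := \big[Order.max/-oo]_(j < n | j != i) F j.

Definition gap_bounded (lam : \bar R) v b :=
  forall i, v i != -oo -> lam + b i <= - v i + max_others (fun j => v j + b j) i.

Lemma Hyp_argmax_neq b y i :
  Hyp b y -> exists2 c, c != i & b c + y c = tmax b y.
Proof.
move=> [_ [c [c' [cc' [Hc Hc']]]]].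
by case: (eqVneq c i) => [ci | ci]; [exists c'; rewrite // -ci eq_sym | exists c].
Qed.

Lemma gap_le_hilbert_Hyp v b y i (vi bi : R) :
  Hyp b y -> v i = vi%:E -> b i = bi%:E ->
  (bi + vi)%:E - max_others (fun j => v j + b j) i <= hilbert v y.
Proof.
move=> Hy vi_eq bi_eq; rewrite /hilbert; case: ifP => [/forallP/(_ i)|_].
  by rewrite vi_eq.
apply: le_ereal_inf_tmp => _ [l [m [-> vy]]].
have [c ci c_max] := Hyp_argmax_neq i Hy.
have [yi yi_eq] : exists yi, y i = yi%:E.
  move: (vy i).2 (Hy.1 i); rewrite vi_eq.
  by case: (y i) => [yi _ _ | // | //]; exists yi.
have vi_le : (vi <= l + yi)%R by move: (vy i).2; rewrite vi_eq yi_eq.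
have gap_le : (bi + vi - l + m)%:E <= max_others (fun j => v j + b j) i.
  apply: le_trans _ (le_bigmax_cond (P := fun j => j != i) _ _ ci); rewrite addeC.
  apply: le_trans _ (leeD2l _ (vy c).1); rewrite addeCA c_max.
  apply: le_trans _ (leeD2l _ (le_bigmax _ (fun j => b j + y j) i)).
  by rewrite bi_eq yi_eq -!EFinD lee_fin; lra.
move: gap_le; case: max_others => [M | | ] /=.
- by rewrite !lee_fin => ?; lra.
- by rewrite leNye.
- by rewrite leeNy_eq.
Qed.

Lemma gap_bounded_of_dist_to_Hyp (lam : \bar R) v b :
  lam <= 0 -> rmax_vec b -> rmax_vec v -> dist_to v (Hyp b) <= - lam ->
  gap_bounded lam v b.
Proof.
move=> + Hb Hv dist_le i vi_fin.
case: lam dist_le => [r dist_le _ | | _ _];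
  [| by rewrite leye_eq | by rewrite addNye leNye].
case Ebi: (b i) => [bi | | ];
  [| by have := Hb i; rewrite Ebi | by rewrite addeNy leNye].
case Evi: (v i) vi_fin => [vi | | ] // _; last by have := Hv i; rewrite Evi.
have gap_le :
    (bi + vi)%:E - max_others (fun j => v j + b j) i <= dist_to v (Hyp b).
  by apply: le_ereal_inf_tmp => _ [y Hy <-]; exact: gap_le_hilbert_Hyp.
have := le_trans gap_le dist_le; case: max_others => [M | | ] //=.
- by rewrite !lee_fin => ?; lra.
- by rewrite addey ?leey.
Qed.

Lemma hilbert_self_le0 v : hilbert v v <= 0.
Proof.
apply: le_trans (@hilbert_le_sandwich v v 0 0 (lexx _) _) _.
  by move=> i; rewrite add0e.
by rewrite subrr.
Qed.

Lemma Hyp_self b v : (exists i, v i != -oo) -> (exists j, b j != -oo) ->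
  rmax_vec v -> tmax b v = -oo -> Hyp b v.
Proof.
move=> [i vi] [j bj] Hv tmax_eq; split=> //.
have bv_ninfty k : b k + v k = -oo.
  apply/eqP; rewrite -leeNy_eq -tmax_eq.
  exact: (le_bigmax _ (fun k => b k + v k)).
exists i, j; rewrite tmax_eq !bv_ninfty; split=> //.
apply/eqP=> ij; have /eqP := bv_ninfty i.
by rewrite adde_eq_ninfty (negbTE vi) ij (negbTE bj).
Qed.

Lemma Hyp_near_argmax v b i0 (bi vi M : R) :
  rmax_vec v -> b i0 = bi%:E -> v i0 = vi%:E -> tmax b v = (bi + vi)%:E ->
  max_others (fun j => v j + b j) i0 = M%:E ->
  exists2 y, Hyp b y & hilbert v y <= (bi + vi - M)%:E.
Proof.
move=> Hv Ebi Evi tmax_eq others_eq.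
have [j0 j0i0 bv_j0] : exists2 j, j != i0 & v j + b j = M%:E.
  exact: bigmaxe_EFin_attained others_eq.
have M_le : (M <= bi + vi)%R.
  rewrite -lee_fin -tmax_eq -bv_j0 addeC.
  exact: (le_bigmax _ (fun j => b j + v j)).
pose y i := if i == i0 then (M - bi)%:E else v i.
have tmax_y : tmax b y = M%:E.
  apply/eqP; rewrite eq_le; apply/andP; split.
    apply: bigmax_le => [|i _]; first exact: leNye.
    rewrite /y; case: eqVneq => [->|ii0].
      by rewrite Ebi -EFinD lee_fin; lra.
    rewrite addeC -others_eq.
    exact: (le_bigmax_cond (P := fun j => j != i0) _ _ ii0).
  apply: le_trans _ (le_bigmax _ (fun j => b j + y j) j0).
  by rewrite /y (negbTE j0i0) addeC bv_j0.
exists y.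
  split=> [i | ]; first by rewrite /y; case: ifP => // _; exact: Hv.
  exists i0, j0; rewrite tmax_y /y eqxx (negbTE j0i0) [b j0 + _]addeC bv_j0.
  rewrite Ebi -EFinD.
  by split; [rewrite eq_sym | split=> //; congr (_%:E); lra].
rewrite -[(bi + vi - M)%R]subr0; apply: hilbert_le_sandwich => [|i]; first lra.
rewrite /y add0e; case: eqVneq => [->|_].
  by rewrite Evi !lee_fin; split; lra.
by split=> //; apply: leeDr; rewrite lee_fin; lra.
Qed.

Lemma dist_to_Hyp_le (lam : \bar R) v b :
  lam <= 0 -> rmax_vec b -> rmax_vec v -> (exists i, v i != -oo) ->
  (exists i, b i != -oo) -> gap_bounded lam v b -> dist_to v (Hyp b) <= - lam.
Proof.
move=> + Hb Hv v_nz b_nz.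
case: lam => [r r_le0 gap | | _ _]; [| by rewrite leye_eq | by rewrite leey].
have bv_neqy i : b i + v i != +oo.
  by move: (Hb i) (Hv i); case: (b i); case: (v i).
have : tmax b v != +oo by apply: bigmaxe_neqy => i _; exact: bv_neqy.
case tmax_eq: (tmax b v) => [mm | // | ] _; last first.
  apply: (@le_trans _ _ (hilbert v v)).
    by apply: ereal_inf_lbound; exists v => //; exact: Hyp_self.
  by apply: le_trans (hilbert_self_le0 v) _; rewrite oppe_ge0.
have [i0 _ bv_i0] := bigmaxe_EFin_attained tmax_eq.
have /andP[bi_fin vi_fin] : (b i0 \is a fin_num) && (v i0 \is a fin_num).
  by rewrite -fin_numD bv_i0.
have [bi Ebi] : exists bi, b i0 = bi%:E by exists (fine (b i0)); rewrite fineK.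
have [vi Evi] : exists vi, v i0 = vi%:E by exists (fine (v i0)); rewrite fineK.
have := gap i0; rewrite Evi Ebi => /(_ isT).
have : max_others (fun j => v j + b j) i0 != +oo.
  by apply: bigmaxe_neqy => j _; rewrite addeC; exact: bv_neqy.
case others_eq: max_others => [M | // | ] _ gap_i0; last first.
  by move: gap_i0; rewrite addeNy leeNy_eq.
move: bv_i0; rewrite Ebi Evi => -[mm_eq]; rewrite -mm_eq in tmax_eq.
have [y Hy hilbert_le] := Hyp_near_argmax Hv Ebi Evi tmax_eq others_eq.
apply: (@le_trans _ _ (hilbert v y)); first by apply: ereal_inf_lbound; exists y.
by apply: le_trans hilbert_le _; move: gap_i0; rewrite /= !lee_fin; lra.
Qed.

End ColumnDistance.

Lemma Top_ge_iff (R : realType) (n p : nat) (V : 'I_n -> 'I_p -> \bar R) lam b :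
  (forall i, lam + b i <= Top V b i) <->
  (forall k, gap_bounded lam (fun i => V i k) b).
Proof.
split=> [Top_ge k i Vik | gap i].
- by apply: le_trans (Top_ge i) _; exact: bigmin_le_cond.
- by apply: le_bigmin => [|k Vik]; [exact: leey | exact: gap].
Qed.

Theorem lemma4p5 (R : realType) (n p : nat) (V : 'I_n -> 'I_p -> \bar R)
  (HV : forall i k, V i k != +oo)
  (Hrow : forall i, exists k, V i k != -oo)
  (Hcol : forall k, exists i, V i k != -oo)
  (lam : \bar R) (Hlam : lam <= 0)
  (b : 'I_n -> \bar R) (Hb : rmax_vec b) (Hbnz : exists i, b i != -oo) :
  (forall i, lam + b i <= Top V b i) <-> distH (cols V) (Hyp b) <= - lam.
Proof.
rewrite Top_ge_iff; split=> [gap | dist_le k].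
- apply: ge_ereal_sup => _ [_ [k _ <-] <-].
  exact: dist_to_Hyp_le (HV^~ k) (Hcol k) Hbnz (gap k).
- apply: gap_bounded_of_dist_to_Hyp Hlam Hb (HV^~ k) _.
  apply: le_trans dist_le; apply: ereal_sup_ubound.
  by exists (fun i => V i k) => //; exists k.
Qed.
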